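(* Let $\sigma(x)=\mathrm{e}^{-x^2/2}$ and let $p_m(x)=\pi^{-1/4}2^{-m/2}(m!)^{-1/2}H_m(x)$ be the orthonormal Hermite polynomials on $\mathbf{R}$ (so $\int_{\mathbf{R}}p_mp_k\mathrm{e}^{-x^2}\,\mathrm{d}x=\delta_{m,k}$), where $H_m$ are the Hermite polynomials. Let $z=\mathrm{e}^{i\theta}$ with $|\theta|<\pi/4$, put $p_{m,z}(x)=z^{1/2}p_m(zx)$ and $N_{m,z}=\int_{-\infty}^\infty|p_{m,z}(x)\sigma(zx)|^2\,\mathrm{d}x$ with $\sigma(zx)=\mathrm{e}^{-z^2x^2/2}$, and let $s_\theta=(\cos 2\theta)^{1/2}$. Then for all non-negative integers $n$, \[ N_{2n,z}\le\pi(n+1)^{1/2}\,2^{4n+2}\,s_\theta^{-4n-1}. \]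
   Context: $H_m(x)=(2x)^m-\frac{m!}{1!(m-2)!}(2x)^{m-2}+\frac{m!}{2!(m-4)!}(2x)^{m-4}-\cdots$ are the (physicists') Hermite polynomials; $z^{1/2}$ is the principal square root. *)

From Stdlib Require Import Reals Lra Factorial.
From Coquelicot Require Import Coquelicot.
Open Scope R_scope.

Definition Cexp (w : C) : C :=
  (exp (fst w) * cos (snd w), exp (fst w) * sin (snd w)).

(* principal square root of a complex number (branch cut on the negative axis,
   Re >= 0, and Im >= 0 on the negative real axis) *)
Definition Csqrt (w : C) : C :=
  let r := Cmod w in
  (sqrt ((r + fst w) / 2),
   (if Rlt_dec (snd w) 0 then -1 else 1) * sqrt ((r - fst w) / 2)).

(* physicists' Hermite polynomial, explicit formula, evaluated at a complex point:
   H_m(w) = sum_{k <= m/2} (-1)^k m!/(k!(m-2k)!) (2w)^(m-2k) *)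
Definition hermiteH (m : nat) (w : C) : C :=
  sum_n (fun k =>
    scal ((-1) ^ k * INR (Factorial.fact m) / (INR (Factorial.fact k) * INR (Factorial.fact (m - 2 * k))))
         (pow_n (RtoC 2 * w)%C (m - 2 * k))) (Nat.div2 m).

Definition orthoP (m : nat) (w : C) : C :=
  scal (/ Rpower PI (1/4) * / Rpower 2 (INR m / 2) * / sqrt (INR (Factorial.fact m)))
       (hermiteH m w).

Definition sigmaC (w : C) : C := Cexp (- (w * w) / RtoC 2)%C.

Definition pmz (m : nat) (z : C) (x : R) : C := (Csqrt z * orthoP m (z * RtoC x))%C.

Definition Nintegrand (m : nat) (z : C) (x : R) : R :=
  (Cmod (pmz m z x * sigmaC (z * RtoC x))%C) ^ 2.

From Stdlib Require Import Reals Lra Lia Factorial Classical.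
From Coquelicot Require Import Coquelicot.
Open Scope R_scope.

(* With z = e^{iθ} one has |z| = 1 and Re z^2 = c := cos 2θ = s^2, so the integrand is
   |p_{2n}(zx)|^2 e^{-c x^2}.  Replacing every coefficient of H_{2n} by its absolute value
   bounds |H_{2n}(zx)| by a sum of n+1 monomials in |x|.  After Cauchy-Schwarz, each squared
   monomial (x^2)^J is controlled by (1 + c x^2) (x^2)^J e^{-c x^2} <= (J+1)! / c^J, and the
   resulting coefficient sum is at most (2n+1)! 6^{2n}, by C(2k,k) <= 4^k and the binomial
   expansion of (2+4)^{2n}.  Hence the integrand is at most K / (1 + c x^2) with
   K = sqrt(n+1) 2^{4n+2} c^{-2n}, and the integral of that Lorentzian over R is K π / sqrt c. *)

Lemma sum_f_R0_ge_term (f : nat -> R) (N i : nat) :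
  (forall k, 0 <= f k) -> (i <= N)%nat -> f i <= sum_f_R0 f N.
Proof.
  intros Hf Hi; induction N as [|N IH]; simpl.
  - replace i with 0%nat by lia; lra.
  - destruct (Nat.eq_dec i (S N)) as [->|Hne].
    + assert (0 <= sum_f_R0 f N) by (apply cond_pos_sum; auto); lra.
    + specialize (IH ltac:(lia)); specialize (Hf (S N)); lra.
Qed.

Lemma sum_f_R0_even_le (f : nat -> R) (n : nat) :
  (forall k, 0 <= f k) -> sum_f_R0 (fun k => f (2 * k)%nat) n <= sum_f_R0 f (2 * n).
Proof.
  intros Hf; induction n as [|n IH]; [simpl; lra|].
  replace (2 * S n)%nat with (S (S (2 * n))) by lia.
  cbn [sum_f_R0]. replace (2 * S n)%nat with (S (S (2 * n))) by lia.
  specialize (Hf (S (2 * n))); lra.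
Qed.

Lemma sum_f_R0_sqr_le (b : nat -> R) (N : nat) :
  (sum_f_R0 b N) ^ 2 <= INR (S N) * sum_f_R0 (fun k => b k ^ 2) N.
Proof.
  set (s := sum_f_R0 b N); set (q := sum_f_R0 (fun k => b k ^ 2) N).
  assert (HN : 0 < INR (S N)) by apply lt_0_INR, Nat.lt_0_succ.
  set (u := s / INR (S N)).
  assert (Hdev : sum_f_R0 (fun k => (b k - u) ^ 2) N = q - 2 * u * s + u ^ 2 * INR (S N)).
  { unfold s, q; rewrite <- sum_cte, scal_sum, <- minus_sum, <- plus_sum.
    apply sum_eq; intros; ring. }
  assert (0 <= sum_f_R0 (fun k => (b k - u) ^ 2) N)
    by (apply cond_pos_sum; intros; apply pow2_ge_0).
  assert (Hsq : s ^ 2 = INR (S N) * (2 * u * s - u ^ 2 * INR (S N)))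
    by (unfold u; field; lra).
  rewrite Hsq; apply Rmult_le_compat_l; lra.
Qed.

Lemma binomial_C_ge_0 (n k : nat) : 0 <= Binomial.C n k.
Proof.
  apply Rmult_le_pos; [apply pos_INR|].
  apply Rlt_le, Rinv_0_lt_compat, Rmult_lt_0_compat; apply INR_fact_lt_0.
Qed.

Lemma central_binomial_le (k : nat) : Binomial.C (2 * k) k <= 4 ^ k.
Proof.
  replace (4 ^ k) with ((1 + 1) ^ (2 * k)) by (rewrite pow_mult; f_equal; lra).
  rewrite binomial.
  set (f := fun i => Binomial.C (2 * k) i * 1 ^ i * 1 ^ (2 * k - i)).
  replace (Binomial.C (2 * k) k) with (f k) by (unfold f; rewrite !pow1; ring).
  apply sum_f_R0_ge_term; [|lia].
  intros i; unfold f; rewrite !pow1, !Rmult_1_r; apply binomial_C_ge_0.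
Qed.

Lemma exp_ge_sum (y : R) (N : nat) :
  0 <= y -> sum_f_R0 (fun k => y ^ k / INR (fact k)) N <= exp y.
Proof.
  intros Hy.
  set (t := fun k => y ^ k / INR (fact k)).
  assert (Hseq : forall M, sum_n (fun k => scal (pow_n y k) (/ INR (fact k))) M = sum_f_R0 t M).
  { intros M; rewrite sum_n_Reals; apply sum_eq; intros i _.
    rewrite pow_n_pow; reflexivity. }
  rewrite <- Hseq.
  apply (is_lim_seq_incr_compare _ _ (is_exp_Reals y)).
  intros k; rewrite !Hseq; change (sum_f_R0 t (S k)) with (sum_f_R0 t k + t (S k)).
  assert (0 <= t (S k)); [|lra].
  apply Rmult_le_pos; [apply pow_le; lra|].
  apply Rlt_le, Rinv_0_lt_compat, INR_fact_lt_0.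
Qed.

Lemma pow_mul_exp_le (y : R) (J : nat) :
  0 <= y -> (1 + y) * y ^ J <= INR (fact (S J)) * exp y.
Proof.
  intros Hy.
  set (t := fun k => y ^ k / INR (fact k)).
  assert (Ht : forall k, 0 <= t k).
  { intros k; apply Rmult_le_pos; [apply pow_le; lra|].
    apply Rlt_le, Rinv_0_lt_compat, INR_fact_lt_0. }
  assert (Htwo : t J + t (S J) <= exp y).
  { pose proof (exp_ge_sum y (S J) Hy) as Hexp.
    change (sum_f_R0 t J + t (S J) <= exp y) in Hexp.
    pose proof (sum_f_R0_ge_term t J J Ht (le_n J)); lra. }
  assert (HJ : 0 < INR (fact J)) by apply INR_fact_lt_0.
  assert (Hfact : INR (fact (S J)) = INR (S J) * INR (fact J))
    by (rewrite fact_simpl; apply mult_INR).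
  assert (Hexpand : INR (fact (S J)) * (t J + t (S J)) = INR (S J) * y ^ J + y ^ S J).
  { unfold t; rewrite Hfact; simpl pow; field; split; lra || (apply not_0_INR; lia). }
  assert (0 <= y ^ J) by (apply pow_le; lra).
  assert (1 <= INR (S J)) by (rewrite S_INR; pose proof (pos_INR J); lra).
  apply Rle_trans with (INR (fact (S J)) * (t J + t (S J))).
  - rewrite Hexpand; simpl pow; nra.
  - apply Rmult_le_compat_l; [apply pos_INR | exact Htwo].
Qed.

Lemma pow_mul_gauss_le (c x : R) (J M : nat) :
  0 < c <= 1 -> (J <= M)%nat ->
  (1 + c * x ^ 2) * (x ^ 2) ^ J * exp (- (c * x ^ 2)) <= INR (fact (S J)) / c ^ M.
Proof.
  intros Hc HJM.
  set (y := c * x ^ 2).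
  assert (Hy : 0 <= y) by (apply Rmult_le_pos; [lra | apply pow2_ge_0]).
  assert (Hx : (x ^ 2) ^ J = y ^ J * (/ c) ^ J)
    by (unfold y; rewrite <- Rpow_mult_distr; f_equal; field; lra).
  assert (Hinv : (/ c) ^ J <= (/ c) ^ M).
  { apply Rle_pow; [|exact HJM]. rewrite <- Rinv_1; apply Rinv_le_contravar; lra. }
  pose proof (pow_mul_exp_le y J Hy) as Hpe.
  assert (Hcj : 0 <= (/ c) ^ J) by (apply pow_le, Rlt_le, Rinv_0_lt_compat; lra).
  assert (He : 0 < exp y) by apply exp_pos.
  rewrite Hx, exp_Ropp; unfold Rdiv; rewrite <- pow_inv.
  apply Rle_trans with (INR (fact (S J)) * (/ c) ^ J).
  - replace ((1 + y) * (y ^ J * (/ c) ^ J) * / exp y)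
      with ((1 + y) * y ^ J / exp y * (/ c) ^ J) by (field; lra).
    apply Rmult_le_compat_r; [exact Hcj|].
    apply (Rmult_le_reg_r (exp y)); [exact He|].
    unfold Rdiv; rewrite Rmult_assoc, Rinv_l by lra; lra.
  - apply Rmult_le_compat_l; [apply pos_INR | exact Hinv].
Qed.

Definition hermite_coef (m k : nat) : R :=
  INR (fact m) / (INR (fact k) * INR (fact (m - 2 * k))).

Definition hermite_majorant (m : nat) (r : R) : R :=
  sum_f_R0 (fun k => hermite_coef m k * (2 * r) ^ (m - 2 * k)) (Nat.div2 m).

Lemma hermite_coef_ge_0 (m k : nat) : 0 <= hermite_coef m k.
Proof.
  apply Rmult_le_pos; [apply pos_INR|].
  apply Rlt_le, Rinv_0_lt_compat, Rmult_lt_0_compat; apply INR_fact_lt_0.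
Qed.

Lemma hermite_coef_sqr (m k : nat) : (2 * k <= m)%nat ->
  hermite_coef m k ^ 2 * INR (fact (S (m - 2 * k))) =
  INR (fact m) * INR (S (m - 2 * k)) * (Binomial.C m (2 * k) * Binomial.C (2 * k) k).
Proof.
  intros Hk; unfold hermite_coef, Binomial.C.
  replace (2 * k - k)%nat with k by lia.
  rewrite fact_simpl, mult_INR.
  pose proof (INR_fact_lt_0 m); pose proof (INR_fact_lt_0 k).
  pose proof (INR_fact_lt_0 (m - 2 * k)); pose proof (INR_fact_lt_0 (2 * k)).
  field; lra.
Qed.

Lemma hermite_coef_sqr_weight_le (m k : nat) : (2 * k <= m)%nat ->
  hermite_coef m k ^ 2 * 4 ^ (m - 2 * k) * INR (fact (S (m - 2 * k)))
  <= Binomial.C m (2 * k) * 2 ^ (2 * k) * 4 ^ (m - 2 * k) * INR (fact (S m)).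
Proof.
  intros Hk; set (J := (m - 2 * k)%nat); set (F := INR (fact m)).
  set (B := Binomial.C m (2 * k)); set (B' := Binomial.C (2 * k) k).
  assert (HF : 0 < F) by apply INR_fact_lt_0.
  assert (H4J : 0 < 4 ^ J) by (apply pow_lt; lra).
  assert (HJ : 0 <= INR (S J) <= INR (S m)) by (split; [apply pos_INR | apply le_INR; lia]).
  assert (HB : 0 <= B) by apply binomial_C_ge_0.
  assert (HB' : 0 <= B' <= 4 ^ k) by (split; [apply binomial_C_ge_0 | apply central_binomial_le]).
  replace (hermite_coef m k ^ 2 * 4 ^ J * INR (fact (S J)))
    with (hermite_coef m k ^ 2 * INR (fact (S J)) * 4 ^ J) by ring.
  unfold J at 1 2; rewrite hermite_coef_sqr by exact Hk; fold J F B B'.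
  rewrite pow_mult, fact_simpl, mult_INR; fold F; replace (2 ^ 2) with 4 by ring.
  replace (F * INR (S J) * (B * B') * 4 ^ J) with (F * 4 ^ J * (INR (S J) * (B * B'))) by ring.
  replace (B * 4 ^ k * 4 ^ J * (INR (S m) * F))
    with (F * 4 ^ J * (INR (S m) * (B * 4 ^ k))) by ring.
  apply Rmult_le_compat_l; [nra|].
  apply Rmult_le_compat; [lra | nra | lra | nra].
Qed.

(* The weights [C(2n,2k) 2^(2k) 4^(2n-2k)] are the even-index terms of the binomial expansion
   of [(2 + 4)^(2n)]. *)
Lemma sum_hermite_coef_sqr_le (n : nat) :
  sum_f_R0 (fun k => hermite_coef (2 * n) k ^ 2 * 4 ^ (2 * n - 2 * k)
                     * INR (fact (S (2 * n - 2 * k)))) n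
  <= INR (fact (S (2 * n))) * 6 ^ (2 * n).
Proof.
  set (f := fun i => Binomial.C (2 * n) i * 2 ^ i * 4 ^ (2 * n - i) * INR (fact (S (2 * n)))).
  assert (Hf : forall i, 0 <= f i).
  { intros i; pose proof (binomial_C_ge_0 (2 * n) i); pose proof (pos_INR (fact (S (2 * n)))).
    pose proof (pow_le 2 i ltac:(lra)); pose proof (pow_le 4 (2 * n - i) ltac:(lra)).
    unfold f; apply Rmult_le_pos; [apply Rmult_le_pos; [apply Rmult_le_pos|]|]; assumption. }
  assert (Hbin : sum_f_R0 f (2 * n) = INR (fact (S (2 * n))) * 6 ^ (2 * n)).
  { unfold f; rewrite <- scal_sum; replace 6 with (2 + 4) by lra; rewrite binomial; ring. }
  rewrite <- Hbin.
  apply Rle_trans with (sum_f_R0 (fun k => f (2 * k)%nat) n).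
  - apply sum_Rle; intros k Hk; apply hermite_coef_sqr_weight_le; lia.
  - apply sum_f_R0_even_le, Hf.
Qed.

Lemma hermite_term_sqr_gauss_le (m k : nat) (c r : R) : 0 < c <= 1 -> (2 * k <= m)%nat ->
  (hermite_coef m k * (2 * r) ^ (m - 2 * k)) ^ 2 * ((1 + c * r ^ 2) * exp (- (c * r ^ 2)))
  <= hermite_coef m k ^ 2 * 4 ^ (m - 2 * k) * INR (fact (S (m - 2 * k))) / c ^ m.
Proof.
  intros Hc Hk; set (J := (m - 2 * k)%nat).
  assert (Hpow : ((2 * r) ^ J) ^ 2 = 4 ^ J * (r ^ 2) ^ J).
  { rewrite <- pow_mult, Nat.mul_comm, pow_mult, <- Rpow_mult_distr; f_equal; ring. }
  pose proof (pow_mul_gauss_le c r J m Hc ltac:(lia)) as Hgauss.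
  set (A := hermite_coef m k ^ 2 * 4 ^ J).
  assert (0 <= A) by (apply Rmult_le_pos; [apply pow2_ge_0 | apply pow_le; lra]).
  replace ((hermite_coef m k * (2 * r) ^ J) ^ 2 * ((1 + c * r ^ 2) * exp (- (c * r ^ 2))))
    with (A * ((1 + c * r ^ 2) * (r ^ 2) ^ J * exp (- (c * r ^ 2))))
    by (unfold A; rewrite Rpow_mult_distr, Hpow; ring).
  replace (A * INR (fact (S J)) / c ^ m) with (A * (INR (fact (S J)) / c ^ m))
    by (unfold Rdiv; ring).
  apply Rmult_le_compat_l; assumption.
Qed.

Lemma hermite_majorant_gauss_le (n : nat) (c r : R) : 0 < c <= 1 ->
  (1 + c * r ^ 2) * hermite_majorant (2 * n) r ^ 2 * exp (- (c * r ^ 2))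
  <= INR (S n) * INR (fact (S (2 * n))) * 6 ^ (2 * n) / c ^ (2 * n).
Proof.
  intros Hc.
  unfold hermite_majorant; rewrite Nat.div2_double.
  set (a := fun k => hermite_coef (2 * n) k * (2 * r) ^ (2 * n - 2 * k)).
  set (w := (1 + c * r ^ 2) * exp (- (c * r ^ 2))).
  assert (Hw : 0 <= w).
  { apply Rmult_le_pos; [|apply Rlt_le, exp_pos].
    pose proof (pow2_ge_0 r); nra. }
  assert (Hc2n : 0 < c ^ (2 * n)) by (apply pow_lt; lra).
  replace ((1 + c * r ^ 2) * sum_f_R0 a n ^ 2 * exp (- (c * r ^ 2)))
    with (w * sum_f_R0 a n ^ 2) by (unfold w; ring).
  apply Rle_trans with (INR (S n) * sum_f_R0 (fun k => a k ^ 2 * w) n).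
  { rewrite <- scal_sum.
    replace (INR (S n) * (w * sum_f_R0 (fun k => a k ^ 2) n))
      with (w * (INR (S n) * sum_f_R0 (fun k => a k ^ 2) n)) by ring.
    apply Rmult_le_compat_l; [exact Hw | apply sum_f_R0_sqr_le]. }
  unfold Rdiv; rewrite !Rmult_assoc; apply Rmult_le_compat_l; [apply pos_INR|].
  eapply Rle_trans.
  { apply sum_Rle; intros k Hk; apply hermite_term_sqr_gauss_le; [exact Hc | lia]. }
  unfold Rdiv; rewrite <- scal_sum, Rmult_comm, <- Rmult_assoc.
  apply Rmult_le_compat_r; [apply Rlt_le, Rinv_0_lt_compat, Hc2n|].
  apply sum_hermite_coef_sqr_le.
Qed.

Lemma poly_mul_pow9_le_pow16 (n : nat) : (INR n + 1) * (2 * INR n + 1) * 9 ^ n <= 6 * 16 ^ n.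
Proof.
  induction n as [|n IH]; [simpl; lra|].
  destruct (Nat.lt_ge_cases n 3) as [Hn|Hn].
  - destruct n as [|[|[|n]]]; [..| lia]; simpl; lra.
  - assert (H3 : 3 <= INR n) by (replace 3 with (INR 3) by (simpl; lra); apply le_INR, Hn).
    assert (H9 : 0 <= 9 ^ n) by (apply pow_le; lra).
    rewrite S_INR; simpl pow.
    assert (Hratio : 9 * ((INR n + 2) * (2 * INR n + 3)) <= 16 * ((INR n + 1) * (2 * INR n + 1)))
      by nra.
    nra.
Qed.

Lemma hermite_constant_le (n : nat) :
  / sqrt PI * / 2 ^ (2 * n) * / INR (fact (2 * n))
    * (INR (S n) * INR (fact (S (2 * n))) * 6 ^ (2 * n))
  <= sqrt (INR n + 1) * 2 ^ (4 * n + 2).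
Proof.
  pose proof (poly_mul_pow9_le_pow16 n) as Hpoly.
  assert (HPI : 3 / 2 <= sqrt PI).
  { rewrite <- (sqrt_pow2 (3 / 2)) by lra; apply sqrt_le_1_alt.
    pose proof PI2_3_2; lra. }
  assert (Hsqrt : 1 <= sqrt (INR n + 1)).
  { rewrite <- sqrt_1 at 1; apply sqrt_le_1_alt; pose proof (pos_INR n); lra. }
  assert (H16 : 0 < 16 ^ n) by (apply pow_lt; lra).
  assert (Hfact : INR (fact (S (2 * n))) = INR (S (2 * n)) * INR (fact (2 * n)))
    by (rewrite fact_simpl; apply mult_INR).
  assert (E6 : 6 ^ (2 * n) = 2 ^ (2 * n) * 9 ^ n)
    by (rewrite !pow_mult, <- Rpow_mult_distr; f_equal; ring).
  assert (E16 : 2 ^ (4 * n + 2) = 4 * 16 ^ n)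
    by (rewrite pow_add, pow_mult; replace (2 ^ 4) with 16 by ring; ring).
  pose proof (INR_fact_lt_0 (2 * n)); pose proof (pow_lt 2 (2 * n) ltac:(lra)).
  rewrite Hfact, E6, E16, (S_INR n), (S_INR (2 * n)), mult_INR.
  replace (INR 2) with 2 by (simpl; ring).
  apply (Rmult_le_reg_l (sqrt PI)); [lra|].
  replace (sqrt PI * (/ sqrt PI * / 2 ^ (2 * n) * / INR (fact (2 * n)) *
      ((INR n + 1) * ((2 * INR n + 1) * INR (fact (2 * n))) * (2 ^ (2 * n) * 9 ^ n))))
    with ((INR n + 1) * (2 * INR n + 1) * 9 ^ n) by (field; lra).
  apply Rle_trans with (6 * 16 ^ n); [exact Hpoly|].
  assert (0 <= (sqrt PI - 3 / 2) * 16 ^ n) by (apply Rmult_le_pos; lra).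
  assert (0 <= (sqrt (INR n + 1) - 1) * (sqrt PI * 16 ^ n)) by (apply Rmult_le_pos; nra).
  nra.
Qed.

Lemma Cmod_Csqrt (w : C) : Cmod (Csqrt w) = sqrt (Cmod w).
Proof.
  destruct w as [u v]; unfold Csqrt; simpl fst; simpl snd.
  assert (Hu : Rabs u <= Cmod (u, v)).
  { pose proof (Rmax_Cmod (u, v)) as H; simpl in H; pose proof (Rmax_l (Rabs u) (Rabs v)); lra. }
  assert (0 <= (Cmod (u, v) + u) / 2 /\ 0 <= (Cmod (u, v) - u) / 2) as [Hp Hm]
    by (unfold Rabs in Hu; destruct (Rcase_abs u); split; lra).
  assert (Hsign : (if Rlt_dec v 0 then -1 else 1) ^ 2 = 1) by (destruct (Rlt_dec v 0); ring).
  unfold Cmod at 1; simpl fst; simpl snd; f_equal.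
  rewrite Rpow_mult_distr, Hsign, !pow2_sqrt by assumption; field.
Qed.

Lemma Cmod_Cexp (w : C) : Cmod (Cexp w) = exp (fst w).
Proof.
  destruct w as [u v]; unfold Cexp, Cmod; simpl fst; simpl snd.
  replace ((exp u * cos v) ^ 2 + (exp u * sin v) ^ 2)
    with (exp u ^ 2 * (sin v ^ 2 + cos v ^ 2)) by ring.
  assert (Hsc : sin v ^ 2 + cos v ^ 2 = 1) by (rewrite <- (sin2_cos2 v); unfold Rsqr; ring).
  rewrite Hsc, Rmult_1_r; apply sqrt_pow2, Rlt_le, exp_pos.
Qed.

Lemma Cmod_sum_n_le (f : nat -> C) (N : nat) :
  Cmod (sum_n f N) <= sum_f_R0 (fun k => Cmod (f k)) N.
Proof.
  induction N as [|N IH].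
  - rewrite sum_O; simpl; lra.
  - rewrite sum_Sn; simpl; eapply Rle_trans; [apply Cmod_triangle | unfold plus; simpl; lra].
Qed.

Lemma Cmod_pow_n (w : C) (k : nat) : Cmod (pow_n w k) = Cmod w ^ k.
Proof.
  induction k as [|k IH]; simpl; [apply Cmod_1|].
  rewrite <- IH; apply Cmod_mult.
Qed.

Lemma Cmod_hermiteH_le (m : nat) (w : C) : Cmod (hermiteH m w) <= hermite_majorant m (Cmod w).
Proof.
  unfold hermiteH, hermite_majorant.
  eapply Rle_trans; [apply Cmod_sum_n_le|].
  apply sum_Rle; intros k _.
  rewrite scal_R_Cmult, Cmod_mult, Cmod_R, Cmod_pow_n, Cmod_mult, Cmod_R, (Rabs_pos_eq 2) by lra.
  apply Req_le; f_equal.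
  unfold hermite_coef, Rdiv; rewrite Rmult_assoc, Rabs_mult, pow_1_abs, Rmult_1_l.
  apply Rabs_pos_eq, (hermite_coef_ge_0 m k).
Qed.

Lemma Cmod_orthoP_sqr (m : nat) (w : C) :
  Cmod (orthoP m w) ^ 2 = / sqrt PI * / 2 ^ m * / INR (fact m) * Cmod (hermiteH m w) ^ 2.
Proof.
  assert (HPI : 0 < PI) by apply PI_RGT_0.
  assert (Hsqr : forall x, 0 < x -> forall y, Rpower x y ^ 2 = Rpower x (2 * y)).
  { intros x Hx y; rewrite <- Rpower_pow by (unfold Rpower; apply exp_pos).
    rewrite Rpower_mult; f_equal; simpl; ring. }
  assert (E1 : Rpower PI (1 / 4) ^ 2 = sqrt PI)
    by (rewrite Hsqr, <- Rpower_sqrt by lra; f_equal; field).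
  assert (E2 : Rpower 2 (INR m / 2) ^ 2 = 2 ^ m)
    by (rewrite Hsqr, <- Rpower_pow by lra; f_equal; field).
  assert (E3 : sqrt (INR (fact m)) ^ 2 = INR (fact m)) by apply pow2_sqrt, pos_INR.
  unfold orthoP; rewrite scal_R_Cmult, Cmod_mult, Cmod_R, Rpow_mult_distr, pow2_abs.
  rewrite !Rpow_mult_distr, !pow_inv, E1, E2, E3; reflexivity.
Qed.

Lemma Nintegrand_unit (m : nat) (theta x : R) :
  Nintegrand m (Cexp (0, theta)) x =
  Cmod (orthoP m (Cexp (0, theta) * RtoC x)) ^ 2 * exp (- (cos (2 * theta) * x ^ 2)).
Proof.
  assert (Hz : Cmod (Cexp (0, theta)) = 1) by (rewrite Cmod_Cexp; apply exp_0).
  assert (Hre : fst (- (Cexp (0, theta) * RtoC x * (Cexp (0, theta) * RtoC x)) / RtoC 2)%C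
                = - (cos (2 * theta) * x ^ 2) / 2).
  { unfold Cexp, Cdiv, Cinv, Cmult, Copp, RtoC; simpl; rewrite exp_0, cos_2a; field. }
  unfold Nintegrand, pmz, sigmaC.
  rewrite !Cmod_mult, Cmod_Csqrt, Hz, sqrt_1, Cmod_Cexp, Hre, Rmult_1_l, Rpow_mult_distr.
  f_equal; set (a := - (cos (2 * theta) * x ^ 2) / 2).
  replace (- (cos (2 * theta) * x ^ 2)) with (a + a) by (unfold a; field).
  rewrite exp_plus; ring.
Qed.

Local Notation continuous_C f x := (@continuous R_UniformSpace C_UniformSpace f x).

Lemma continuous_C_mult (f g : R -> C) (x : R) :
  continuous_C f x -> continuous_C g x -> continuous_C (fun y => (f y * g y)%C) x.
Proof.
  (* [continuous_mult] is stated for the uniform structure of the absolute-value ring [C_AbsRing],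
     which has the same neighbourhoods as the product structure of [C] ([locally_C]). *)
  assert (Hequiv : forall h : R -> C, continuous_C h x <->
            @continuous R_UniformSpace (AbsRing_UniformSpace C_AbsRing) h x).
  { intros h; unfold continuous, filterlim, filter_le, filtermap.
    split; intros H P HP; apply H, locally_C, HP. }
  rewrite !Hequiv; apply (@continuous_mult _ C_AbsRing).
Qed.

Lemma continuous_C_sum_n (F : nat -> R -> C) (N : nat) (x : R) :
  (forall k, continuous_C (F k) x) -> continuous_C (fun y => sum_n (fun k => F k y) N) x.
Proof.
  intros HF; induction N as [|N IH].
  - apply continuous_ext with (f := F 0%nat); [intros; rewrite sum_O; reflexivity | apply HF].
  - apply continuous_ext with (f := fun y => plus (sum_n (fun k => F k y) N) (F (S N) y));
      [intros; rewrite sum_Sn; reflexivity|].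
    apply (@continuous_plus _ _ C_NormedModule); auto.
Qed.

Lemma continuous_C_pow_n (f : R -> C) (k : nat) (x : R) :
  continuous_C f x -> continuous_C (fun y => pow_n (f y) k) x.
Proof.
  intros Hf; induction k as [|k IH]; [apply continuous_const|].
  apply continuous_C_mult; assumption.
Qed.

Lemma continuous_C_scal (r : R) (f : R -> C) (x : R) :
  continuous_C f x -> continuous_C (fun y => scal r (f y)) x.
Proof.
  intros Hf; apply continuous_ext with (f := fun y => (RtoC r * f y)%C);
    [intros; rewrite scal_R_Cmult; reflexivity|].
  apply continuous_C_mult; [apply continuous_const | exact Hf].
Qed.

Lemma continuous_RtoC (x : R) : continuous_C (fun y : R => RtoC y) x.
Proof.
  intros P [eps HP]; exists eps; intros y Hy.
  apply HP; split; [exact Hy | apply ball_center].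
Qed.

Lemma continuous_orthoP_lin (m : nat) (z : C) (x : R) :
  continuous_C (fun y => orthoP m (z * RtoC y)) x.
Proof.
  apply continuous_C_scal, continuous_C_sum_n; intros k.
  apply continuous_C_scal, continuous_C_pow_n.
  apply continuous_C_mult; [apply continuous_const|].
  apply continuous_C_mult; [apply continuous_const | apply continuous_RtoC].
Qed.

Lemma continuous_Nintegrand_unit (m : nat) (theta x : R) :
  continuous (Nintegrand m (Cexp (0, theta))) x.
Proof.
  apply continuous_ext with
    (f := fun y => Cmod (orthoP m (Cexp (0, theta) * RtoC y)) ^ 2
                   * exp (- (cos (2 * theta) * y ^ 2)));
    [intros; symmetry; apply Nintegrand_unit|].
  assert (Hmod : continuous (fun y => Cmod (orthoP m (Cexp (0, theta) * RtoC y))) x).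
  { apply continuous_comp with (g := Cmod);
      [apply continuous_orthoP_lin | apply (@filterlim_norm C_AbsRing C_NormedModule)]. }
  apply (@continuous_mult _ R_AbsRing).
  - apply (@continuous_mult _ R_AbsRing); [exact Hmod|].
    apply (@continuous_mult _ R_AbsRing); [exact Hmod | apply continuous_const].
  - apply continuous_exp_comp, (@ex_derive_continuous R_AbsRing R_NormedModule); auto_derive; auto.
Qed.

Lemma is_RInt_gen_of_RInt_bounded (f : R -> R) (B : R) :
  (forall x, continuous f x) -> (forall x, 0 <= f x) ->
  (forall a b, a <= b -> RInt f a b <= B) ->
  exists N, is_RInt_gen f (Rbar_locally m_infty) (Rbar_locally p_infty) N /\ N <= B.
Proof.
  intros Hcont Hpos HB.
  assert (Hex : forall a b, ex_RInt f a b)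
    by (intros a b; apply (@ex_RInt_continuous R_CompleteNormedModule); intros; apply Hcont).
  set (E := fun y => exists a b, a <= b /\ y = RInt f a b).
  assert (HEB : is_upper_bound E B) by (intros y (a & b & Hab & ->); apply HB, Hab).
  assert (HE0 : E (RInt f 0 0)) by (exists 0, 0; split; [lra | reflexivity]).
  destruct (completeness E (ex_intro _ B HEB) (ex_intro _ _ HE0)) as [N [HNub HNlub]].
  exists N; split; [|apply HNlub, HEB].
  intros P [eps HP].
  (* Since [f >= 0], the integral over [[a, b]] grows with the interval, so once one
     interval comes within [eps] of the supremum [N], every larger interval does too. *)
  assert (Hnear : exists a0 b0, a0 <= b0 /\ N - eps < RInt f a0 b0).
  { apply NNPP; intros Hno.
    assert (Hub : is_upper_bound E (N - eps)).
    { intros y (a & b & Hab & ->); apply Rnot_lt_le; intros Hlt; apply Hno; exists a, b; auto. }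
    pose proof (HNlub _ Hub); pose proof (cond_pos eps); lra. }
  destruct Hnear as (a0 & b0 & Hab0 & Hgt).
  apply Filter_prod with (Q := fun a => a < a0) (R := fun b => b0 < b);
    [exists a0; auto | exists b0; auto|].
  intros a b Ha Hb; exists (RInt f a b); split.
  - apply (@RInt_correct R_CompleteNormedModule), Hex.
  - apply HP.
    assert (Hle : RInt f a b <= N) by (apply HNub; exists a, b; split; [lra | reflexivity]).
    assert (Hsplit : RInt f a b = RInt f a a0 + RInt f a0 b0 + RInt f b0 b).
    { rewrite <- (RInt_Chasles f a a0 b), <- (RInt_Chasles f a0 b0 b) by apply Hex.
      unfold plus; simpl; ring. }
    assert (0 <= RInt f a a0) by (apply RInt_ge_0; auto; lra).
    assert (0 <= RInt f b0 b) by (apply RInt_ge_0; auto; lra).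
    change (Rabs (RInt f a b - N) < eps); apply Rabs_def1; lra.
Qed.

Lemma RInt_le_lorentzian (f : R -> R) (K c : R) :
  0 < c -> 0 <= K -> (forall x, continuous f x) ->
  (forall x, f x <= K / (1 + c * x ^ 2)) ->
  forall a b, a <= b -> RInt f a b <= K * PI / sqrt c.
Proof.
  intros Hc HK Hcont Hf a b Hab.
  assert (Hsc : 0 < sqrt c) by (apply sqrt_lt_R0, Hc).
  assert (Hsq : sqrt c * sqrt c = c) by (apply sqrt_sqrt; lra).
  set (g := fun x => K / (1 + c * x ^ 2)).
  set (G := fun x => K / sqrt c * atan (sqrt c * x)).
  assert (HG : forall x, is_derive G x (g x)).
  { intros x; unfold G, g; auto_derive; [auto|].
    replace (sqrt c * x * (sqrt c * x * 1)) with (sqrt c * sqrt c * x ^ 2) by ring.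
    rewrite Hsq; pose proof (pow2_ge_0 x).
    field; split; [nra | lra]. }
  assert (Hg : forall x, continuous g x).
  { intros x; apply (@ex_derive_continuous R_AbsRing R_NormedModule); unfold g; auto_derive.
    pose proof (pow2_ge_0 x); nra. }
  assert (HI : is_RInt g a b (minus (G b) (G a)))
    by (apply (@is_RInt_derive R_CompleteNormedModule); intros; [apply HG | apply Hg]).
  apply Rle_trans with (RInt g a b).
  - apply RInt_le; [exact Hab | | eexists; exact HI | intros; apply Hf].
    apply (@ex_RInt_continuous R_CompleteNormedModule); intros; apply Hcont.
  - rewrite (is_RInt_unique _ _ _ _ HI); unfold minus, plus, opp, G; simpl.
    pose proof (atan_bound (sqrt c * b)); pose proof (atan_bound (sqrt c * a)).
    assert (0 <= K / sqrt c)
      by (apply Rmult_le_pos; [exact HK | apply Rlt_le, Rinv_0_lt_compat, Hsc]).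
    replace (K * PI / sqrt c) with (K / sqrt c * PI) by (field; lra).
    replace (K / sqrt c * atan (sqrt c * b) + - (K / sqrt c * atan (sqrt c * a)))
      with (K / sqrt c * (atan (sqrt c * b) - atan (sqrt c * a))) by ring.
    apply Rmult_le_compat_l; [assumption | lra].
Qed.

Lemma Nintegrand_even_le (n : nat) (theta x : R) : 0 < cos (2 * theta) ->
  Nintegrand (2 * n) (Cexp (0, theta)) x <=
  sqrt (INR n + 1) * 2 ^ (4 * n + 2) / cos (2 * theta) ^ (2 * n) / (1 + cos (2 * theta) * x ^ 2).
Proof.
  intros Hcpos; set (c := cos (2 * theta)).
  assert (Hc : 0 < c <= 1) by (split; [exact Hcpos | apply COS_bound]).
  assert (Hden : 0 < 1 + c * x ^ 2) by (pose proof (pow2_ge_0 x); nra).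
  assert (Hc2n : 0 < c ^ (2 * n)) by (apply pow_lt; lra).
  set (P := / sqrt PI * / 2 ^ (2 * n) * / INR (fact (2 * n))).
  assert (HP : 0 < P).
  { assert (0 < sqrt PI) by (apply sqrt_lt_R0, PI_RGT_0).
    pose proof (pow_lt 2 (2 * n) ltac:(lra)); pose proof (INR_fact_lt_0 (2 * n)).
    unfold P; repeat apply Rmult_lt_0_compat; apply Rinv_0_lt_compat; assumption. }
  set (h := Cmod (hermiteH (2 * n) (Cexp (0, theta) * RtoC x))).
  set (M := hermite_majorant (2 * n) (Rabs x)).
  assert (Hherm : h <= M).
  { unfold h, M; replace (Rabs x) with (Cmod (Cexp (0, theta) * RtoC x))
      by (rewrite Cmod_mult, Cmod_Cexp, Cmod_R; simpl; rewrite exp_0; ring).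
    apply Cmod_hermiteH_le. }
  rewrite Nintegrand_unit, Cmod_orthoP_sqr; fold c P h.
  apply (Rmult_le_reg_l (1 + c * x ^ 2)); [exact Hden|].
  replace ((1 + c * x ^ 2) * (sqrt (INR n + 1) * 2 ^ (4 * n + 2) / c ^ (2 * n) / (1 + c * x ^ 2)))
    with (sqrt (INR n + 1) * 2 ^ (4 * n + 2) / c ^ (2 * n)) by (field; lra).
  apply Rle_trans with (P * ((1 + c * Rabs x ^ 2) * M ^ 2 * exp (- (c * Rabs x ^ 2)))).
  - rewrite pow2_abs.
    replace ((1 + c * x ^ 2) * (P * h ^ 2 * exp (- (c * x ^ 2))))
      with (P * ((1 + c * x ^ 2) * h ^ 2 * exp (- (c * x ^ 2)))) by ring.
    apply Rmult_le_compat_l; [lra|].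
    apply Rmult_le_compat_r; [apply Rlt_le, exp_pos|].
    apply Rmult_le_compat_l; [lra|].
    apply pow_incr; split; [apply Cmod_ge_0 | exact Hherm].
  - eapply Rle_trans; [apply Rmult_le_compat_l; [lra | apply hermite_majorant_gauss_le, Hc]|].
    unfold Rdiv; rewrite <- Rmult_assoc.
    apply Rmult_le_compat_r; [apply Rlt_le, Rinv_0_lt_compat, Hc2n | apply hermite_constant_le].
Qed.

Theorem theorem5 (theta : R) (n : nat) :
  Rabs theta < PI / 4 ->
  let z : C := Cexp (0%R, theta) in
  let s := sqrt (cos (2 * theta)) in
  exists N : R,
    is_RInt_gen (Nintegrand (2 * n) z) (Rbar_locally m_infty) (Rbar_locally p_infty) N /\
    N <= PI * sqrt (INR n + 1) * 2 ^ (4 * n + 2) / s ^ (4 * n + 1).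
Proof.
  intros Htheta z s.
  set (c := cos (2 * theta)).
  assert (Hc : 0 < c) by (apply Rabs_def2 in Htheta; apply cos_gt_0; lra).
  set (K := sqrt (INR n + 1) * 2 ^ (4 * n + 2) / c ^ (2 * n)).
  assert (Hc2n : 0 < c ^ (2 * n)) by (apply pow_lt, Hc).
  assert (HK : 0 <= K).
  { apply Rmult_le_pos; [|apply Rlt_le, Rinv_0_lt_compat, Hc2n].
    apply Rmult_le_pos; [apply sqrt_pos | apply pow_le; lra]. }
  destruct (is_RInt_gen_of_RInt_bounded (Nintegrand (2 * n) z) (K * PI / sqrt c))
    as (N & HN & HNle).
  - apply continuous_Nintegrand_unit.
  - intros x; apply pow2_ge_0.
  - apply RInt_le_lorentzian; [exact Hc | exact HK | apply continuous_Nintegrand_unit |].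
    intros x; apply Nintegrand_even_le, Hc.
  - exists N; split; [exact HN|].
    assert (Hs : s ^ (4 * n + 1) = c ^ (2 * n) * sqrt c).
    { unfold s; fold c; replace (4 * n)%nat with (2 * (2 * n))%nat by lia.
      rewrite pow_add, pow_1, pow_mult, pow2_sqrt by lra; reflexivity. }
    assert (0 < sqrt c) by (apply sqrt_lt_R0, Hc).
    rewrite Hs; replace (PI * sqrt (INR n + 1) * 2 ^ (4 * n + 2) / (c ^ (2 * n) * sqrt c))
      with (K * PI / sqrt c) by (unfold K; field; lra).
    exact HNle.
Qed.
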